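(* Let $O,M^\star,\hat E\in\mathbb R^{n\times T}$, $Z_1,\dots,Z_k\in\mathbb R^{n\times T}$ and $\tau^\star\in\mathbb R^k$ satisfy $O=M^\star+\sum_{i=1}^k\tau^\star_iZ_i+\hat E$, and let $\lambda>0$. Suppose $(\hat M,\hat m,\hat\tau)$ is a minimizer of $$\min_{M\in\mathbb R^{n\times T},\tau\in\mathbb R^k,m\in\mathbb R^n}\ \frac12\Big\|O-M-m\mathbf 1^\top-\sum_{i=1}^k\tau_iZ_i\Big\|_F^2+\lambda\|M\|_\star .$$ Let $\hat M=\hat U\hat\Sigma\hat V^\top$ be the SVD of $\hat M$ and let $\hat{\mathbf T}=\{\hat UA^\top+B\hat V^\top+v\mathbf 1^\top: A,B,v\}$ be the span of the tangent space of $\hat M$ and $\{v\mathbf 1^\top:v\in\mathbb R^n\}$. Then $$D(\hat\tau-\tau^\star)=\Delta^1+\Delta^2+\Delta^3,$$ where $D\in\mathbb R^{k\times k}$ has entries $D_{ij}=\langle P_{\hat{\mathbf T}^\perp}(Z_i),P_{\hat{\mathbf T}^\perp}(Z_j)\rangle$ and $\Delta^1,\Delta^2,\Delta^3\in\mathbb R^k$ have components $\Delta^1_i=\lambda\langle Z_i,\hat U\hat V^\top\rangle$, $\Delta^2_i=\langle Z_i,P_{\hat{\mathbf T}^\perp}(\hat E)\rangle$, $\Delta^3_i=\langle Z_i,P_{\hat{\mathbf T}^\perp}(M^\star)\rangle$.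
   Context: $\|\cdot\|_F$ is the Frobenius norm, $\|\cdot\|_\star$ the nuclear norm, $\langle\cdot,\cdot\rangle$ the Frobenius inner product, $\mathbf 1$ the all-ones vector in $\mathbb R^T$, and $P_{\hat{\mathbf T}^\perp}$ the orthogonal projection onto the orthogonal complement of $\hat{\mathbf T}$. The SVD is the compact SVD ($\hat U,\hat V$ with orthonormal columns, $\hat\Sigma$ diagonal positive). *)

From HB Require Import structures.
From mathcomp Require Import all_boot all_order all_algebra.
From mathcomp Require Import boolp classical_sets reals.
Set Implicit Arguments. Unset Strict Implicit. Unset Printing Implicit Defensive.
Import Order.TTheory GRing.Theory Num.Theory.
Local Open Scope ring_scope.
Local Open Scope classical_set_scope.

Section Defs.
Variable R : realType.

Definition frobi {n T : nat} (A B : 'M[R]_(n, T)) : R :=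
  \sum_(i < n) \sum_(j < T) A i j * B i j.

Definition frob {n T : nat} (A : 'M[R]_(n, T)) : R := Num.sqrt (frobi A A).

Definition onesT (T : nat) : 'rV[R]_T := const_mx 1.

Definition is_csvd {n T r : nat} (M : 'M[R]_(n, T)) (U : 'M[R]_(n, r))
    (s : 'rV[R]_r) (V : 'M[R]_(T, r)) : Prop :=
  [/\ U^T *m U = 1%:M, V^T *m V = 1%:M, (forall j, 0 < s 0 j)
    & M = U *m diag_mx s *m V^T].

Definition nucnorm {n T : nat} (M : 'M[R]_(n, T)) : R :=
  sup [set x : R | exists r (U : 'M[R]_(n, r)) (s : 'rV[R]_r) (V : 'M[R]_(T, r)),
          is_csvd M U s V /\ x = \sum_(j < r) s 0 j].

Definition tangentT {n T r : nat} (U : 'M[R]_(n, r)) (V : 'M[R]_(T, r))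
  : set 'M[R]_(n, T) :=
  [set X | exists (A : 'M[R]_(T, r)) (B : 'M[R]_(n, r)) (v : 'cV[R]_n),
      X = U *m A^T + B *m V^T + v *m onesT T].

Definition proj_perp {n T : nat} (S : set 'M[R]_(n, T)) (X : 'M[R]_(n, T))
  : 'M[R]_(n, T) :=
  xget 0 [set Y | S (X - Y) /\ (forall W, S W -> frobi Y W = 0)].

Definition objective {n T k : nat} (O : 'M[R]_(n, T)) (Z : 'I_k -> 'M[R]_(n, T))
    (lambda : R) (M : 'M[R]_(n, T)) (m : 'cV[R]_n) (tau : 'cV[R]_k) : R :=
  2^-1 * frob (O - M - m *m onesT T - \sum_(i < k) tau i 0 *: Z i) ^+ 2
  + lambda * nucnorm M.

End Defs.

(* The residual G := O - Mhat - mhat 1^T - sum_i tauhat_i Z_i satisfies the first-order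
   conditions of the minimisation: <G, Z_i> = 0 (vary tau), G 1 = 0 (vary m), and
   G V = lambda U, G^T U = lambda V (vary M).  For the last two, ||P Q^T||_* <=
   (||P||^2 + ||Q||^2) / 2 with equality at the balanced factorisation
   Mhat = (U S^(1/2)) (V S^(1/2))^T, so perturbing one factor gives a smooth majorant of the
   objective that is tight at the minimiser.  Consequently V^T 1 = 0, which makes the
   projection onto the orthogonal complement of T-hat explicit, and G - lambda U V^T is
   orthogonal to T-hat.  Pairing O = Mstar + sum_i taustar_i Z_i + Ehat with P(Z_i), where P is
   self-adjoint and kills Mhat and mhat 1^T, yields the identity. *)

From HB Require Import structures.
From mathcomp Require Import all_boot all_order all_algebra.
From mathcomp Require Import boolp classical_sets reals.
From mathcomp Require Import ring lra.
Import Order.TTheory GRing.Theory Num.Theory.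
Local Open Scope ring_scope.
Set Implicit Arguments. Unset Strict Implicit.

Section Frobenius.
Variables (R : realType) (n T : nat).
Implicit Types A B C X : 'M[R]_(n, T).

Lemma frobiE A B : frobi A B = \tr (A *m B^T).
Proof.
rewrite /frobi /mxtrace; apply: eq_bigr => i _; rewrite !mxE.
by apply: eq_bigr => j _; rewrite !mxE.
Qed.

Lemma frobiC A B : frobi A B = frobi B A.
Proof. by rewrite !frobiE -mxtrace_tr trmx_mul trmxK. Qed.

Lemma frobiDl A B C : frobi (A + B) C = frobi A C + frobi B C.
Proof. by rewrite !frobiE mulmxDl mxtraceD. Qed.

Lemma frobiZl a A C : frobi (a *: A) C = a * frobi A C.
Proof. by rewrite !frobiE -scalemxAl mxtraceZ. Qed.

Lemma frobiBl A B C : frobi (A - B) C = frobi A C - frobi B C.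
Proof. by rewrite frobiDl -scaleN1r frobiZl mulN1r. Qed.

Lemma frobiDr A B C : frobi C (A + B) = frobi C A + frobi C B.
Proof. by rewrite !(frobiC C) frobiDl. Qed.

Lemma frobiZr a A C : frobi C (a *: A) = a * frobi C A.
Proof. by rewrite !(frobiC C) frobiZl. Qed.

Lemma frobiBr A B C : frobi C (A - B) = frobi C A - frobi C B.
Proof. by rewrite !(frobiC C) frobiBl. Qed.

Lemma frobi0l C : frobi 0 C = 0.
Proof. by rewrite -(scale0r 0) frobiZl mul0r. Qed.

Lemma frobi0r C : frobi C 0 = 0.
Proof. by rewrite frobiC frobi0l. Qed.

Lemma frobi_sumr k (c : 'I_k -> R) (F : 'I_k -> 'M[R]_(n, T)) C :
  frobi C (\sum_(j < k) c j *: F j) = \sum_(j < k) c j * frobi C (F j).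
Proof.
rewrite (big_morph (frobi C) (fun A B => frobiDr A B C) (frobi0r C)).
by apply: eq_bigr => j _; rewrite frobiZr.
Qed.

Lemma frobi_ge0 A : 0 <= frobi A A.
Proof. by apply: sumr_ge0 => i _; apply: sumr_ge0 => j _; rewrite -expr2 sqr_ge0. Qed.

Lemma frobi_eq0 A : frobi A A = 0 -> A = 0.
Proof.
move=> A0; apply/matrixP => i j; apply/eqP; rewrite mxE -sqrf_eq0 expr2; apply/eqP.
have sq_ge0 (x : R) : 0 <= x * x by rewrite -expr2 sqr_ge0.
have row0 : \sum_j A i j * A i j = 0.
  by apply: (psumr_eq0P _ A0) => // i' _; apply: sumr_ge0.
by apply: (psumr_eq0P _ row0).
Qed.

Lemma frobiI A B : (forall X, frobi A X = frobi B X) -> A = B.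
Proof.
move=> eqAB; apply/eqP; rewrite -subr_eq0; apply/eqP/frobi_eq0.
by rewrite frobiBl !eqAB subrr.
Qed.

Lemma frobi_sqrB A X t :
  frobi (A - t *: X) (A - t *: X) = frobi A A - 2 * t * frobi A X + t ^+ 2 * frobi X X.
Proof. rewrite !frobiBl !frobiBr !frobiZl !frobiZr (frobiC X A); ring. Qed.

Lemma frobi_amgm A B : 2 * frobi A B <= frobi A A + frobi B B.
Proof. have := frobi_ge0 (A - B); rewrite !frobiBl !frobiBr (frobiC B A); lra. Qed.

End Frobenius.

Section FrobeniusMul.
Variable R : realType.

Lemma frobi_mulmxl n m T (U : 'M[R]_(n, m)) (A : 'M[R]_(m, T)) B :
  frobi (U *m A) B = frobi A (U^T *m B).
Proof. by rewrite !frobiE -mulmxA mxtrace_mulC trmx_mul trmxK mulmxA. Qed.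

Lemma frobi_mulmxr n m T (A : 'M[R]_(n, m)) (V : 'M[R]_(m, T)) B :
  frobi (A *m V) B = frobi A (B *m V^T).
Proof. by rewrite !frobiE trmx_mul trmxK mulmxA. Qed.

Lemma bessel_ineq n p T (U : 'M[R]_(n, p)) (A : 'M[R]_(n, T)) :
  U^T *m U = 1%:M -> frobi (U^T *m A) (U^T *m A) <= frobi A A.
Proof.
move=> hU; set B := U^T *m A; set D := A - U *m B.
have UD : U^T *m D = 0 by rewrite /D mulmxBr mulmxA hU mul1mx subrr.
have -> : A = D + U *m B by rewrite /D subrK.
clearbody B D.
rewrite !frobiDl !frobiDr (frobiC D (U *m B)) !frobi_mulmxl UD mulmxA hU mul1mx.
by rewrite frobi0r; have := frobi_ge0 D; lra.
Qed.

Lemma frobi_tr n T (A B : 'M[R]_(n, T)) : frobi A^T B^T = frobi A B.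
Proof. by rewrite !frobiE trmxK mxtrace_mulC -mxtrace_tr trmx_mul trmxK. Qed.

End FrobeniusMul.

Lemma lin_coef_eq0_of_quad_ge0 (R : realFieldType) (a b : R) :
  (forall t, 0 <= t * a + t ^+ 2 * b) -> a = 0.
Proof.
move=> ge0; apply/eqP/negPn/negP => a_neq0.
set c := `|b| + 1; have c_gt0 : 0 < c by rewrite ltr_pwDr.
have scaled : c ^+ 2 * ((- a / c) * a + (- a / c) ^+ 2 * b) = a ^+ 2 * (b - c).
  by field; rewrite gt_eqF.
have : 0 <= a ^+ 2 * (b - c).
  by rewrite -scaled; apply: mulr_ge0 (ge0 _); rewrite exprn_ge0 // ltW.
have : b - c <= -1 by rewrite /c; have := ler_norm b; lra.
have : 0 < a ^+ 2 by rewrite exprn_even_gt0.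
nra.
Qed.

Lemma frobi_stationary (R : realType) n T (A X : 'M[R]_(n, T)) (c d : R) :
  (forall t, frobi A A <= frobi (A - t *: X) (A - t *: X) + t * c + t ^+ 2 * d) ->
  2 * frobi A X = c.
Proof.
move=> min0; suff : c - 2 * frobi A X = 0 by lra.
apply: (@lin_coef_eq0_of_quad_ge0 _ _ (frobi X X + d)) => t.
by have := min0 t; rewrite frobi_sqrB; lra.
Qed.

Lemma objectiveE (R : realType) n T k (O : 'M[R]_(n, T)) Z lambda M m
    (tau : 'cV_k) :
  let X := O - M - m *m onesT R T - \sum_(i < k) tau i 0 *: Z i in
  objective O Z lambda M m tau = 2^-1 * frobi X X + lambda * nucnorm M.
Proof. by rewrite /objective /frob sqr_sqrtr // frobi_ge0. Qed.

Section NuclearNorm.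
Variable R : realType.

Definition sqrt_diag r (s : 'rV[R]_r) := diag_mx (\row_j Num.sqrt (s 0 j)).

Lemma tr_sqrt_diag r (s : 'rV[R]_r) : (sqrt_diag s)^T = sqrt_diag s.
Proof. exact: tr_diag_mx. Qed.

Lemma sqrt_diagK r (s : 'rV[R]_r) :
  (forall j, 0 <= s 0 j) -> sqrt_diag s *m sqrt_diag s = diag_mx s.
Proof.
move=> s_ge0; rewrite mul_diag_mx; apply/matrixP => i j; rewrite !mxE.
case: (i =P j) => [->|_]; last by rewrite !mulr0n mulr0.
by rewrite !mulr1n -expr2 sqr_sqrtr.
Qed.

Lemma mulmx_diag_eq0 m r (X : 'M[R]_(m, r)) (d : 'rV[R]_r) :
  (forall j, d 0 j != 0) -> X *m diag_mx d = 0 -> X = 0.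
Proof.
move=> d_neq0 /matrixP X0; apply/matrixP => i j.
have /eqP := X0 i j; rewrite mul_mx_diag !mxE mulf_eq0 (negbTE (d_neq0 j)) orbF.
by move/eqP.
Qed.

Lemma is_csvd_tr n T r (M : 'M[R]_(n, T)) U s (V : 'M_(T, r)) :
  is_csvd M U s V -> is_csvd M^T V s U.
Proof.
case=> hU hV s_gt0 ->; split=> //.
by rewrite !trmx_mul trmxK tr_diag_mx mulmxA.
Qed.

Lemma frobi_orthonormal_sqrt_diag n r (W : 'M[R]_(n, r)) (s : 'rV[R]_r) :
  W^T *m W = 1%:M -> (forall j, 0 <= s 0 j) ->
  frobi (W *m sqrt_diag s) (W *m sqrt_diag s) = \sum_j s 0 j.
Proof.
move=> hW s_ge0; rewrite frobi_mulmxl mulmxA hW mul1mx frobiE tr_sqrt_diag.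
by rewrite sqrt_diagK // mxtrace_diag.
Qed.

Lemma csvd_sqrt_factor n T r (M : 'M[R]_(n, T)) U s (V : 'M_(T, r)) :
  is_csvd M U s V -> M = (U *m sqrt_diag s) *m (V *m sqrt_diag s)^T.
Proof.
case=> _ _ s_gt0 ->.
rewrite trmx_mul tr_sqrt_diag mulmxA -(mulmxA U (sqrt_diag s)) sqrt_diagK //.
by move=> j; apply: ltW.
Qed.

Lemma csvd_sum_le_factor n T p r (P : 'M[R]_(n, p)) (Q : 'M[R]_(T, p)) U s V :
  @is_csvd R n T r (P *m Q^T) U s V ->
  \sum_j s 0 j <= (frobi P P + frobi Q Q) / 2.
Proof.
case=> hU hV _ PQ.
have -> : \sum_j s 0 j = frobi (U^T *m P) (V^T *m Q).
  have US : U^T *m P *m Q^T = diag_mx s *m V^T.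
    by rewrite -mulmxA PQ !mulmxA hU mul1mx.
  rewrite -[LHS]mxtrace_diag -[diag_mx s]mulmx1 -hV mulmxA -[V]trmxK -frobiE.
  by rewrite trmxK -US frobi_mulmxr trmxK.
have := frobi_amgm (U^T *m P) (V^T *m Q).
have := bessel_ineq P hU; have := bessel_ineq Q hV; lra.
Qed.

Lemma nucnorm_factor_le n T p (P : 'M[R]_(n, p)) (Q : 'M[R]_(T, p)) :
  nucnorm (P *m Q^T) <= (frobi P P + frobi Q Q) / 2.
Proof.
rewrite /nucnorm; set E := (X in sup X).
have [[x Ex]|E0] := pselect (E !=set0)%classic.
  apply: ge_sup; first by exists x.
  by move=> _ [r [U [s [V [svd ->]]]]]; apply: csvd_sum_le_factor svd.
have -> : E = set0 by apply/seteqP; split=> // y Ey; case: E0; exists y.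
by rewrite sup0; have := frobi_ge0 P; have := frobi_ge0 Q; lra.
Qed.

Lemma nucnorm_csvd n T r (M : 'M[R]_(n, T)) U s (V : 'M_(T, r)) :
  is_csvd M U s V -> nucnorm M = \sum_j s 0 j.
Proof.
move=> svd; have [hU hV s_gt0 _] := svd.
have s_ge0 j : 0 <= s 0 j by apply: ltW.
rewrite /nucnorm; set E := (X in sup X).
have ub : ubound E (\sum_j s 0 j).
  move=> _ [r' [U' [s' [V' [svd' ->]]]]].
  move: svd'; rewrite (csvd_sqrt_factor svd) => /csvd_sum_le_factor.
  by rewrite !frobi_orthonormal_sqrt_diag //; lra.
have Es : E (\sum_j s 0 j) by exists r, U, s, V.
apply/eqP; rewrite eq_le ge_sup //=; last by exists (\sum_j s 0 j).
by apply: ub_le_sup => //; exists (\sum_j s 0 j).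
Qed.

Lemma nucnorm_tr n T (M : 'M[R]_(n, T)) : nucnorm M^T = nucnorm M.
Proof.
rewrite /nucnorm; congr sup; apply/seteqP; split=> _ [r [U [s [V [svd ->]]]]].
  by exists r, V, s, U; split=> //; rewrite -[M]trmxK; apply: is_csvd_tr.
by exists r, V, s, U; split=> //; apply: is_csvd_tr.
Qed.

Lemma prox_nucnorm_mulV n T r (C M : 'M[R]_(n, T)) U s (V : 'M_(T, r)) lambda :
  0 < lambda -> is_csvd M U s V ->
  (forall M', 2^-1 * frobi (C - M) (C - M) + lambda * nucnorm M
              <= 2^-1 * frobi (C - M') (C - M') + lambda * nucnorm M') ->
  (C - M) *m V = lambda *: U.
Proof.
move=> lam_gt0 svd minM; have [hU hV s_gt0 _] := svd.
have s_ge0 j : 0 <= s 0 j by apply: ltW.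
set P0 := U *m sqrt_diag s; set Q0 := V *m sqrt_diag s.
have normP0 : frobi P0 P0 = \sum_j s 0 j by apply: frobi_orthonormal_sqrt_diag.
have normQ0 : frobi Q0 Q0 = \sum_j s 0 j by apply: frobi_orthonormal_sqrt_diag.
have stationary P1 : frobi ((C - M) *m Q0) P1 = frobi (lambda *: P0) P1.
  rewrite frobi_mulmxr frobiZl.
  suff : 2 * frobi (C - M) (P1 *m Q0^T) = 2 * (lambda * frobi P0 P1) by lra.
  apply: (frobi_stationary (d := lambda * frobi P1 P1)) => t.
  have nuc_le : nucnorm (M + t *: (P1 *m Q0^T))
      <= \sum_j s 0 j + t * frobi P0 P1 + t ^+ 2 / 2 * frobi P1 P1.
    rewrite {1}(csvd_sqrt_factor svd) -/P0 -/Q0 scalemxAl -mulmxDl.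
    apply: le_trans (nucnorm_factor_le _ _) _.
    rewrite frobiDl !frobiDr !frobiZl !frobiZr (frobiC P1 P0) normP0 normQ0; lra.
  have := ler_wpM2l (ltW lam_gt0) nuc_le.
  have := minM (M + t *: (P1 *m Q0^T)); rewrite opprD addrA (nucnorm_csvd svd).
  lra.
have GQ0 : (C - M) *m Q0 = lambda *: P0 by apply: frobiI.
apply/eqP; rewrite -subr_eq0; apply/eqP.
apply: (mulmx_diag_eq0 (d := \row_j Num.sqrt (s 0 j))).
  by move=> j; rewrite mxE sqrtr_eq0 -ltNge.
by rewrite -/(sqrt_diag s) mulmxBl -mulmxA GQ0 -scalemxAl subrr.
Qed.

Lemma prox_nucnorm_trmx_mulU n T r (C M : 'M[R]_(n, T)) U s (V : 'M_(T, r)) lambda :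
  0 < lambda -> is_csvd M U s V ->
  (forall M', 2^-1 * frobi (C - M) (C - M) + lambda * nucnorm M
              <= 2^-1 * frobi (C - M') (C - M') + lambda * nucnorm M') ->
  (C - M)^T *m U = lambda *: V.
Proof.
move=> lam_gt0 svd minM; rewrite linearB.
apply: (prox_nucnorm_mulV lam_gt0 (is_csvd_tr svd)) => M'.
have := minM M'^T; rewrite -(frobi_tr (C - M)) -(frobi_tr (C - M'^T)) !linearB /=.
by rewrite !nucnorm_tr trmxK.
Qed.

End NuclearNorm.

Section TangentSpace.
Variables (R : realType) (n T r : nat) (U : 'M[R]_(n, r)) (V : 'M[R]_(T, r)).
Hypotheses (hU : U^T *m U = 1%:M) (hV : V^T *m V = 1%:M).
Let ones := (onesT R T)^T.

Lemma tangentT_UVt : tangentT U V (U *m V^T).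
Proof. by exists V, 0, 0; rewrite !mul0mx !addr0. Qed.

Lemma tangentT_csvd M s : is_csvd M U s V -> tangentT U V M.
Proof.
case=> _ _ _ ->; exists (V *m diag_mx s), 0, 0.
by rewrite !mul0mx !addr0 trmx_mul tr_diag_mx mulmxA.
Qed.

Lemma tangentT_ones v : tangentT U V (v *m onesT R T).
Proof. by exists 0, 0, v; rewrite trmx0 mulmx0 !mul0mx !add0r. Qed.

Lemma tangentT_orth G :
  U^T *m G = 0 -> G *m V = 0 -> G *m ones = 0 ->
  forall W, tangentT U V W -> frobi G W = 0.
Proof.
move=> UG GV Go _ [A [B [v ->]]].
rewrite !frobiDr frobiC frobi_mulmxl UG frobi0r add0r.
by rewrite -frobi_mulmxr GV -[onesT R T]trmxK -frobi_mulmxr Go !frobi0l addr0.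
Qed.

Hypothesis V_ones : V^T *m ones = 0.

Lemma tangentT_proj_exists X :
  exists Y, tangentT U V (X - Y) /\ forall W, tangentT U V W -> frobi Y W = 0.
Proof.
set Pu := 1%:M - U *m U^T.
set Pv := 1%:M - (V *m V^T + T%:R^-1 *: (ones *m ones^T)).
have UPu : U^T *m Pu = 0 by rewrite mulmxBr mulmx1 mulmxA hU mul1mx subrr.
have ones_V : ones^T *m V = 0.
  by rewrite -[V]trmxK -trmx_mul V_ones trmx0.
have PvV : Pv *m V = 0.
  rewrite mulmxBl mul1mx mulmxDl -!mulmxA hV mulmx1 -scalemxAl -mulmxA ones_V.
  by rewrite mulmx0 scaler0 addr0 subrr.
have Pv_ones : Pv *m ones = 0.
  (* For T = 0 the junk value 0^-1 = 0 is harmless, as ones is then empty. *)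
  have [T0|T_gt0] := posnP T.
    by apply/matrixP => i; have := ltn_ord i; rewrite {2}T0.
  have ones_sq : ones^T *m ones = T%:R%:M.
    apply/matrixP => i j; rewrite !ord1 !mxE.
    under eq_bigr => l _ do rewrite !mxE mulr1.
    by rewrite sumr_const card_ord.
  rewrite mulmxBl mul1mx mulmxDl -!mulmxA V_ones mulmx0 add0r -scalemxAl -mulmxA.
  by rewrite ones_sq mul_mx_scalar scalerA mulVf ?pnatr_eq0 -?lt0n // scale1r subrr.
exists (Pu *m X *m Pv); split.
  exists ((U^T *m X *m Pv)^T), (X *m V), (T%:R^-1 *: (X *m ones)).
  have XPv : X *m Pv = X - (X *m V *m V^T + (T%:R^-1 *: (X *m ones)) *m onesT R T).
    by rewrite mulmxBr mulmx1 mulmxDr !mulmxA -scalemxAr -scalemxAl mulmxA trmxK.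
  rewrite trmxK -mulmxA mulmxBl mul1mx -!mulmxA XPv (mulmxA X V).
  by rewrite opprB addrCA subKr addrA.
apply: tangentT_orth; first by rewrite !mulmxA UPu !mul0mx.
  by rewrite -!mulmxA PvV !mulmx0.
by rewrite -!mulmxA Pv_ones !mulmx0.
Qed.

End TangentSpace.

Section ProjPerp.
Variables (R : realType) (n T : nat) (S : set 'M[R]_(n, T)).
Hypothesis proj_ex :
  forall X, exists Y, S (X - Y) /\ forall W, S W -> frobi Y W = 0.
Let P := proj_perp S.

Lemma proj_perpP X : S (X - P X) /\ forall W, S W -> frobi (P X) W = 0.
Proof. exact: (xgetPex 0 (proj_ex X)). Qed.

Lemma frobi_proj_perp_orth X G :
  (forall W, S W -> frobi G W = 0) -> frobi (P X) G = frobi X G.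
Proof.
move=> G_orth; have := G_orth _ (proj_perpP X).1.
by rewrite frobiC frobiBl; lra.
Qed.

Lemma frobi_proj_perp_idr X Y : frobi (P X) (P Y) = frobi (P X) Y.
Proof.
have := (proj_perpP X).2 _ (proj_perpP Y).1.
by rewrite frobiBr; lra.
Qed.

Lemma frobi_proj_perpC X Y : frobi (P X) Y = frobi X (P Y).
Proof. by rewrite -frobi_proj_perp_idr frobiC frobi_proj_perp_idr frobiC. Qed.

End ProjPerp.

Lemma sum_scale_col_deltaD (R : pzRingType) (M : lmodType R) k (x : 'cV[R]_k)
    (F : 'I_k -> M) i t :
  \sum_j (x + t *: delta_mx i 0) j 0 *: F j = \sum_j x j 0 *: F j + t *: F i.
Proof.
under eq_bigr => j _ do rewrite !mxE.
rewrite [0 == 0]eqxx; under eq_bigr => j _ do rewrite andbT scalerDl.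
rewrite big_split /=; congr (_ + _).
rewrite (bigD1 i) //= eqxx mulr1 big1 ?addr0 // => j /negbTE ->.
by rewrite mulr0 scale0r.
Qed.

Section Optimality.
Variables (R : realType) (n T k r : nat) (O : 'M[R]_(n, T))
  (Z : 'I_k -> 'M[R]_(n, T)) (lambda : R) (Mhat : 'M[R]_(n, T))
  (mhat : 'cV[R]_n) (tauhat : 'cV[R]_k)
  (U : 'M[R]_(n, r)) (s : 'rV[R]_r) (V : 'M[R]_(T, r)).
Hypothesis lambda_gt0 : 0 < lambda.
Hypothesis minimizer : forall M m tau,
  objective O Z lambda Mhat mhat tauhat <= objective O Z lambda M m tau.
Hypothesis svd : is_csvd Mhat U s V.

Let residual := O - Mhat - mhat *m onesT R T - \sum_(i < k) tauhat i 0 *: Z i.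

Lemma residual_orthZ i : frobi residual (Z i) = 0.
Proof.
suff : 2 * frobi residual (Z i) = 0 by lra.
apply: (frobi_stationary (c := 0) (d := 0)) => t.
have := minimizer Mhat mhat (tauhat + t *: delta_mx i 0).
by rewrite !objectiveE sum_scale_col_deltaD opprD addrA; lra.
Qed.

Lemma residual_mul_ones : residual *m (onesT R T)^T = 0.
Proof.
apply: frobiI => w; rewrite frobi0l frobi_mulmxr trmxK.
suff : 2 * frobi residual (w *m onesT R T) = 0 by lra.
apply: (frobi_stationary (c := 0) (d := 0)) => t.
have := minimizer Mhat (mhat + t *: w) tauhat.
by rewrite !objectiveE mulmxDl -scalemxAl opprD addrA [_ - t *: _ - _]addrAC; lra.
Qed.

Let target := O - mhat *m onesT R T - \sum_(i < k) tauhat i 0 *: Z i.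

Lemma target_subr M :
  O - M - mhat *m onesT R T - \sum_(i < k) tauhat i 0 *: Z i = target - M.
Proof. by rewrite (addrAC O) (addrAC (O - mhat *m onesT R T)). Qed.

Lemma minimizer_target M :
  2^-1 * frobi (target - Mhat) (target - Mhat) + lambda * nucnorm Mhat
  <= 2^-1 * frobi (target - M) (target - M) + lambda * nucnorm M.
Proof. by have := minimizer M mhat tauhat; rewrite !objectiveE !target_subr. Qed.

Lemma residual_mulV : residual *m V = lambda *: U.
Proof.
by rewrite /residual target_subr; apply: prox_nucnorm_mulV svd minimizer_target.
Qed.

Lemma residual_trmx_mulU : residual^T *m U = lambda *: V.
Proof.
by rewrite /residual target_subr; apply: prox_nucnorm_trmx_mulU svd minimizer_target.
Qed.

Lemma trmxV_mul_ones : V^T *m (onesT R T)^T = 0.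
Proof.
have UtR : U^T *m residual = lambda *: V^T.
  by rewrite -[residual]trmxK -trmx_mul residual_trmx_mulU linearZ.
apply: (scalerI (lt0r_neq0 lambda_gt0)).
by rewrite scaler0 scalemxAl -UtR -mulmxA residual_mul_ones mulmx0.
Qed.

Lemma residual_tangent_orth W :
  tangentT U V W -> frobi (residual - lambda *: (U *m V^T)) W = 0.
Proof.
have [hU hV _ _] := svd.
apply: tangentT_orth.
- rewrite mulmxBr -scalemxAr mulmxA hU mul1mx -[residual]trmxK -trmx_mul.
  by rewrite residual_trmx_mulU linearZ subrr.
- by rewrite mulmxBl residual_mulV -scalemxAl -mulmxA hV mulmx1 subrr.
- rewrite mulmxBl residual_mul_ones -scalemxAl -mulmxA trmxV_mul_ones mulmx0.
  by rewrite scaler0 subrr.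
Qed.

Lemma tangent_proj_exists X :
  exists Y, tangentT U V (X - Y) /\ forall W, tangentT U V W -> frobi Y W = 0.
Proof.
by have [hU hV _ _] := svd; apply: tangentT_proj_exists hU hV trmxV_mul_ones X.
Qed.

Lemma frobi_proj_residual X :
  frobi (proj_perp (tangentT U V) X) residual
  = frobi X residual - lambda * frobi X (U *m V^T).
Proof.
have PX_UV : frobi (proj_perp (tangentT U V) X) (U *m V^T) = 0.
  by apply: (proj_perpP tangent_proj_exists X).2; apply: tangentT_UVt.
have := frobi_proj_perp_orth tangent_proj_exists X residual_tangent_orth.
by rewrite !(frobiBr residual) !frobiZr PX_UV; lra.
Qed.

End Optimality.

Unset Implicit Arguments. Set Strict Implicit.

Theorem lemma1 (R : realType) (n T k : nat)
    (O Mstar Ehat : 'M[R]_(n, T)) (Z : 'I_k -> 'M[R]_(n, T))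
    (taustar : 'cV[R]_k) (lambda : R)
    (Mhat : 'M[R]_(n, T)) (mhat : 'cV[R]_n) (tauhat : 'cV[R]_k)
    (r : nat) (U : 'M[R]_(n, r)) (s : 'rV[R]_r) (V : 'M[R]_(T, r)) :
  O = Mstar + \sum_(i < k) taustar i 0 *: Z i + Ehat ->
  0 < lambda ->
  (forall (M : 'M[R]_(n, T)) (m : 'cV[R]_n) (tau : 'cV[R]_k),
      objective O Z lambda Mhat mhat tauhat <= objective O Z lambda M m tau) ->
  is_csvd Mhat U s V ->
  let P := proj_perp (tangentT U V) in
  let D : 'M[R]_k := \matrix_(i < k, j < k) frobi (P (Z i)) (P (Z j)) in
  D *m (tauhat - taustar) =
    \col_(i < k) (lambda * frobi (Z i) (U *m V^T))
  + \col_(i < k) frobi (Z i) (P Ehat)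
  + \col_(i < k) frobi (Z i) (P Mstar).
Proof.
move=> decompO lambda_gt0 minimizer svd P D.
have proj_ex := tangent_proj_exists lambda_gt0 minimizer svd.
apply/matrixP => i j; rewrite (ord1 j) !mxE.
have -> : \sum_j0 D i j0 * (tauhat - taustar) j0 0
    = frobi (P (Z i)) (\sum_j0 tauhat j0 0 *: Z j0)
    - frobi (P (Z i)) (\sum_j0 taustar j0 0 *: Z j0).
  rewrite !frobi_sumr -sumrB; apply: eq_bigr => j0 _.
  by rewrite !mxE (frobi_proj_perp_idr proj_ex); ring.
have PZ_Mhat : frobi (P (Z i)) Mhat = 0.
  by apply: (proj_perpP proj_ex (Z i)).2; apply: tangentT_csvd svd.
have PZ_ones : frobi (P (Z i)) (mhat *m onesT R T) = 0.
  by apply: (proj_perpP proj_ex (Z i)).2; apply: tangentT_ones.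
have := frobi_proj_residual lambda_gt0 minimizer svd (Z i).
have := residual_orthZ minimizer i; rewrite frobiC.
rewrite -!(frobi_proj_perpC proj_ex) decompO !frobiBr !frobiDr.
lra.
Qed.
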